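(* Let $M=(\mathbb N_0\times\mathbb N_0)\cup(\mathbb Z\times\mathbb N_{\ge2})\subseteq\mathbb Z^2$ and let $R=\mathbb R[x,y;M]$ be the monoid algebra of $M$ over $\mathbb R$ (monomials $x^ay^b$ with $(a,b)\in M$). Then $R$ is an IDF domain and is almost atomic, but $R$ is not atomic (in particular $R$ is not an FFD).
   Context: For an integral domain $R$: an irreducible is a nonzero nonunit $a$ with $a=uv$ forcing $u$ or $v$ a unit; an element is atomic if it is a unit or a finite product of irreducibles; $R$ is atomic if every nonzero element is atomic; $R$ is almost atomic if for every nonzero $b\in R$ there is an atomic element $a$ such that $ab$ is atomic; $R$ is an IDF domain if every nonzero element is divisible by only finitely many irreducibles up to associates; $R$ is an FFD if it is atomic and each nonzero element has finitely many factorizations up to order and associates. *)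

(* R[x,y;M] is modelled as a subring of the fraction field
   of R[x][y] (with R = Stdlib's reals, a realType via Rstruct). *)
From HB Require Import structures.
From mathcomp Require Import all_boot all_order all_algebra fraction.
From mathcomp Require Import Rstruct.
Set Implicit Arguments. Unset Strict Implicit. Unset Printing Implicit Defensive.
Import Order.TTheory GRing.Theory Num.Theory.
Local Open Scope ring_scope.

Section SubringNotions.
Variables (F : fieldType) (S : F -> Prop).

Definition unitS (u : F) : Prop := S u /\ u != 0 /\ S u^-1.

Definition irredS (a : F) : Prop :=
  [/\ S a, a != 0, ~ unitS a &
      forall u v, S u -> S v -> a = u * v -> unitS u \/ unitS v].

Definition atomicS (a : F) : Prop :=
  unitS a \/
  exists l : seq F, [/\ l != [::], (forall z, z \in l -> irredS z) &
                        a = \prod_(z <- l) z].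

Definition dvdS (a b : F) : Prop := exists c, S c /\ b = a * c.

Definition assocS (a b : F) : Prop := exists u, unitS u /\ a = u * b.

Definition atomic_dom : Prop := forall a, S a -> a != 0 -> atomicS a.

Definition almost_atomic_dom : Prop :=
  forall b, S b -> b != 0 -> exists a, atomicS a /\ atomicS (a * b).

Definition IDF_dom : Prop :=
  forall b, S b -> b != 0 ->
    exists l : seq F, forall a, irredS a -> dvdS a b ->
      exists2 c, c \in l & assocS a c.
End SubringNotions.

(* Polynomials p : {poly {poly R}}: outer variable = x, inner variable = y;
   (p`_i)`_j is the coefficient of x^i y^j. *)
Definition RXY := {poly {poly Rdefinitions.R}}.
Definition QXY := {fraction RXY}.

Definition xF : QXY := FracField.tofrac ('X : RXY).

Definition inM (a : int) (b : nat) : bool := (0 <= a) || (2 <= b)%N.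

Definition monoidAlg (f : QXY) : Prop :=
  exists (n : nat) (p : RXY),
    f = FracField.tofrac p / xF ^+ n /\
    forall i j : nat, (p`_i)`_j != 0 -> inM (i%:Z - n%:Z) j.

From HB Require Import structures.
From mathcomp Require Import all_boot all_order all_algebra fraction.
From mathcomp Require Import Rstruct.
From Stdlib Require Import ClassicalEpsilon.
From mathcomp Require Import zify ring.
Set Implicit Arguments. Unset Strict Implicit. Unset Printing Implicit Defensive.
Import Order.TTheory GRing.Theory Num.Theory.
Local Open Scope ring_scope.

(* Read an element [f = p / x^n] of [R[x,y;M]] as a polynomial [ypoly f] in [y] over
   the field [R(x)]; this is an injective multiplicative map. Monomials [x^a y^b] with
   [b < 2] have [a >= 0], so the [y]-constant term [ycoef0 f] lies in [R[x]], and the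
   units are the [f] for which [ypoly f] and [ycoef0 f] are both constants.
   Elements with a nonzero [y]-constant term are atomic by induction on the sizes of
   [ypoly f] and [ycoef0 f]; as [x^n f = y^m g] for such a [g], [R] is almost atomic.
   For an irreducible divisor [z] of [y^2/x], [ypoly z] is associate to [y^k] with
   [k <= 2]: [k = 2] would make [x] a proper factor of [z], and [k <= 1] makes [z] a
   polynomial, but [y^2/x] is not a product of polynomials, so it is not atomic.
   Finally, an irreducible divisor [a] of [b] is determined up to associates by
   [ypoly a] up to a factor [c x^e]: the divisors of [ypoly b] in [R(x)[y]] and those
   of the leading coefficient of [b] in [R[x]] leave finitely many choices, and two
   irreducibles differing by [c x^e] are associate because [x] is not a unit. *)

(** * Divisibility in a multiplicative submonoid of a field *)

Section SubmonoidDivisibility.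
Variables (F : fieldType) (S : F -> Prop).
Hypotheses (S1 : S 1) (SM : forall a b, S a -> S b -> S (a * b)).

Lemma S_prod (l : seq F) : (forall z, z \in l -> S z) -> S (\prod_(z <- l) z).
Proof. by move=> Sl; rewrite big_seq; apply: (big_ind S S1 SM) => z /Sl. Qed.

Lemma S_expr a k : S a -> S (a ^+ k).
Proof.
by move=> Sa; elim: k => [|k IH]; rewrite ?expr0 ?exprS; [exact: S1 | exact: SM].
Qed.

Lemma unitS1 : unitS S 1.
Proof. by do !split; rewrite ?invr1 ?oner_neq0. Qed.

Lemma unitSM a b : unitS S a -> unitS S b -> unitS S (a * b).
Proof.
move=> [Sa [a0 Sa']] [Sb [b0 Sb']]; do !split; [exact: SM | exact: mulf_neq0 |].
by rewrite invfM; exact: SM.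
Qed.

Lemma unitSV a : unitS S a -> unitS S a^-1.
Proof. by move=> [Sa [a0 Sa']]; do !split; rewrite ?invr_neq0 ?invrK. Qed.

Lemma unitSKl u a : unitS S u -> unitS S (u * a) -> unitS S a.
Proof.
move=> Uu Uua; have [_ [u0 _]] := Uu.
by rewrite -(mulKf u0 a); apply: unitSM (unitSV Uu) Uua.
Qed.

Lemma irredS_unitM c z : unitS S c -> irredS S z -> irredS S (c * z).
Proof.
move=> Uc [Sz z0 nUz irr_z]; have [Sc [c0 Sc']] := Uc.
split; [exact: SM | exact: mulf_neq0 | by move/(unitSKl Uc) |].
move=> u v Su Sv Ecz.
have Ez : z = (c^-1 * u) * v by rewrite -mulrA -Ecz mulKf.
case: (irr_z _ _ (SM Sc' Su) Sv Ez) => [Uu|]; [left | by right].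
by rewrite -(mulKf (invr_neq0 c0) u) invrK; exact: unitSM Uc Uu.
Qed.

Lemma nonunit_factorS f : S f -> f != 0 -> ~ unitS S f -> ~ irredS S f ->
  exists u v, [/\ S u, S v, f = u * v, ~ unitS S u & ~ unitS S v].
Proof.
move=> Sf f0 nUf nIf; apply: NNPP => nfac; apply: nIf; split=> // u v Su Sv Ef.
case: (classic (unitS S u)) => [|nUu]; first by left.
case: (classic (unitS S v)) => [|nUv]; first by right.
by case: nfac; exists u, v.
Qed.

Lemma atomicS_irred z : irredS S z -> atomicS S z.
Proof.
move=> Iz; right; exists [:: z]; split; rewrite ?big_seq1 //.
by move=> w; rewrite mem_seq1 => /eqP ->.
Qed.

Lemma atomicSM a b : atomicS S a -> atomicS S b -> atomicS S (a * b).
Proof.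
have unitM_atomic c d : unitS S c -> atomicS S d -> atomicS S (c * d).
  move=> Uc [Ud|[l [l0 Il ->]]]; first by left; exact: unitSM.
  case: l l0 Il => [//|z l] _ Il.
  right; exists (c * z :: l); split; rewrite ?big_cons ?mulrA //.
  move=> w; rewrite in_cons => /predU1P[->|wl]; last by apply: Il; rewrite in_cons wl orbT.
  by apply: irredS_unitM Uc _; apply: Il; rewrite mem_head.
move=> [Ua|Ha]; first exact: unitM_atomic.
move=> [Ub|[lb [lb0 Ilb ->]]].
  by rewrite mulrC; exact: unitM_atomic Ub (or_intror Ha).
have [la [la0 Ila ->]] := Ha; right; exists (la ++ lb); split; rewrite ?big_cat //.
- by case: la la0 {Ila}.
- by move=> w; rewrite mem_cat => /orP[/Ila|/Ilb].
Qed.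

Lemma atomicSX a k : atomicS S a -> atomicS S (a ^+ k).
Proof.
move=> Ha; elim: k => [|k IH]; first by rewrite expr0; left; exact: unitS1.
by rewrite exprS; apply: atomicSM.
Qed.

End SubmonoidDivisibility.

(** * Polynomials *)

Section FiniteDivisorClasses.
Variable F : fieldType.
Implicit Types p q d : {poly F}.

Lemma exists_irredp_dvdp p : (1 < size p)%N -> exists q, irreducible_poly q /\ q %| p.
Proof.
have [n] := ubnP (size p); elim: n p => // n IH p size_p p_gt1.
case: (classic (irreducible_poly p)) => [Ip|nIp]; first by exists p; rewrite dvdpp.
have [q [q_neq1 qp nqp]] : exists q, [/\ size q != 1%N, q %| p & ~~ (q %= p)].
  apply: NNPP => H; apply: nIp; split=> // q q_neq1 qp; apply: NNPP => nqp.
  by apply: H; exists q; split=> //; apply/negP.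
have p0 : p != 0 by rewrite -size_poly_gt0; lia.
have q0 : q != 0 by apply: contraNneq p0 => q0; move: qp; rewrite q0 dvd0p.
have q_gt1 : (1 < size q)%N by move: q_neq1; rewrite -size_poly_gt0 in q0; lia.
have size_qp : (size q < size p)%N.
  have := dvdp_leq p0 qp; rewrite leq_eqVlt => /orP[|//].
  by rewrite (dvdp_size_eqp qp) (negPf nqp).
have [r [Ir rq]] := IH q (leq_trans size_qp size_p) q_gt1.
by exists r; split=> //; exact: dvdp_trans rq qp.
Qed.

(* Induction on size: an irreducible factor q of p = r q either divides a divisor
   d of p, and then d / q divides r, or is coprime to d, and then d divides r. *)
Lemma finite_dvdp_classes p : p != 0 ->
  exists l : seq {poly F}, forall d, d %| p -> exists2 d0, d0 \in l & d %= d0.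
Proof.
have [n] := ubnP (size p); elim: n p => // n IH p size_p p0.
case: (leqP (size p) 1) => [p_le1|p_gt1].
  exists [:: 1] => d dp; exists 1; rewrite ?mem_seq1 // -size_poly_eq1.
  have d0 : d != 0 by apply: contraNneq p0 => d0; move: dp; rewrite d0 dvd0p.
  by rewrite eqn_leq (leq_trans (dvdp_leq p0 dp) p_le1) size_poly_gt0.
have [q [Iq qp]] := exists_irredp_dvdp p_gt1.
have Erq : (p %/ q) * q = p by rewrite divpK.
have q0 : q != 0 := irredp_neq0 Iq.
have r0 : p %/ q != 0 by apply: contraNneq p0 => r0; rewrite -Erq r0 mul0r.
have size_rp : (size (p %/ q)%R < size p)%N.
  by rewrite size_divp // ltn_subrL size_poly_gt0 p0 andbT -subn1 subn_gt0; case: Iq.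
have [l Hl] := IH _ (leq_trans size_rp size_p) r0.
exists (l ++ map (fun d0 => q * d0) l) => d dp.
have [cop|ncop] := boolP (coprimep d q).
  have /Hl[d0 d0l Ed] : d %| p %/ q by rewrite -(Gauss_dvdpl _ cop) Erq.
  by exists d0; rewrite // mem_cat d0l.
have qd : q %| d.
  have gq : gcdp d q %= q by apply: Iq; rewrite ?dvdp_gcdr // -coprimep_def.
  by rewrite -(eqp_dvdl _ gq) dvdp_gcdl.
have /Hl[d0 d0l Ed] : d %/ q %| p %/ q by rewrite -(dvdp_mul2r _ _ q0) divpK // Erq.
exists (q * d0); first by rewrite mem_cat map_f ?orbT.
by rewrite -(divpK qd) mulrC eqp_mul2l.
Qed.

End FiniteDivisorClasses.

Lemma tofrac_inj (T : idomainType) : injective (@FracField.tofrac T).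
Proof. by move=> p q /eqP; rewrite tofrac_eq => /eqP. Qed.

Lemma size_mul_eq2 (R : idomainType) (p q : {poly R}) :
  size (p * q) = 2 -> size p = 1%N \/ size q = 1%N.
Proof.
have [->|p0] := eqVneq p 0; first by rewrite mul0r size_poly0.
have [->|q0] := eqVneq q 0; first by rewrite mulr0 size_poly0.
rewrite size_mul //; move: p0 q0; rewrite -!size_poly_gt0; lia.
Qed.

Lemma drop_polyMXnE (R : nzRingType) n (q : {poly R}) :
  (forall i, (i < n)%N -> q`_i = 0) -> drop_poly n q * 'X ^+ n = q.
Proof.
move=> q_low; rewrite -[RHS](poly_take_drop n) [take_poly n q](_ : _ = 0) ?add0r //.
by apply/polyP => i; rewrite coef_take_poly coef0; case: ltnP => // /q_low.
Qed.

Lemma expr_div_shift (F : fieldType) (t : F) e j1 n1 j2 n2 : t != 0 ->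
  (e + j1 + n2 = j2 + n1)%N -> t ^+ e * (t ^+ j1 / t ^+ n1) = t ^+ j2 / t ^+ n2.
Proof.
move=> t0 Ee; apply/eqP; rewrite mulrA eqr_div ?expf_neq0 // -!exprD.
by rewrite Ee.
Qed.

Lemma eqp_scale_lead (F : fieldType) (p m : {poly F}) : m != 0 -> p %= m ->
  p = (lead_coef p / lead_coef m) *: m.
Proof.
move=> m0 /eqp_eq Em.
by rewrite mulrC -scalerA -Em scalerA mulVf ?scale1r ?lead_coef_eq0.
Qed.

Lemma dvdp_mulXn_split (F : fieldType) (q r : {poly F}) N :
  q != 0 -> q %| r * 'X ^+ N -> exists j q', q = q' * 'X ^+ j /\ q' %| r.
Proof.
move=> q0 qrX; have [j [q' q'0 Eq]] := multiplicity_XsubC q 0.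
rewrite q0 /= in q'0; rewrite polyC0 subr0 in Eq.
exists j, q'; split=> //.
have cop : coprimep q' ('X ^+ N) by rewrite coprimep_expr // coprimepX.
rewrite -(Gauss_dvdpl _ cop).
by apply: dvdp_trans qrX; rewrite Eq dvdp_mulr.
Qed.

(** * [R[x,y;M]] inside [R(x)[y]] *)

Opaque FracField.inv FracField.mul FracField.add FracField.opp FracField.tofrac.

Local Notation RR := Rdefinitions.R.
Local Notation Kx := {fraction {poly RR}}.
Local Notation "p %:F" := (FracField.tofrac p).

Definition xK : Kx := ('X : {poly RR})%:F.
Definition yF : QXY := (('X : {poly RR})%:P)%:F.

Lemma xF_neq0 : xF != 0. Proof. by rewrite tofrac_eq0 polyX_eq0. Qed.
Lemma xK_neq0 : xK != 0. Proof. by rewrite tofrac_eq0 polyX_eq0. Qed.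
Lemma xFn_neq0 n : xF ^+ n != 0. Proof. by rewrite expf_neq0 // xF_neq0. Qed.
Lemma xKn_neq0 n : xK ^+ n != 0. Proof. by rewrite expf_neq0 // xK_neq0. Qed.

Definition toKy (p : RXY) : {poly Kx} := map_poly (@FracField.tofrac _) (swapXY p).

Lemma toKyM p q : toKy (p * q) = toKy p * toKy q.
Proof. by rewrite /toKy !rmorphM. Qed.

Lemma coef_toKy p j : (toKy p)`_j = ((swapXY p)`_j)%:F.
Proof. by rewrite coef_map. Qed.

Lemma toKy_inj : injective toKy.
Proof.
move=> p q /polyP Epq; apply: (can_inj swapXYK); apply/polyP => j.
by apply: tofrac_inj; rewrite -!coef_toKy.
Qed.

Lemma toKyXn n : toKy ('X ^+ n) = (xK ^+ n)%:P.
Proof. by rewrite /toKy !rmorphXn /= swapXY_X map_polyC. Qed.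

Lemma toKy_mulXn p n : toKy (p * 'X ^+ n) = xK ^+ n *: toKy p.
Proof. by rewrite toKyM toKyXn mulrC mul_polyC. Qed.

Lemma xfrac_eq (p p' : RXY) n n' :
  p%:F / xF ^+ n = p'%:F / xF ^+ n' -> p * 'X ^+ n' = p' * 'X ^+ n.
Proof.
by move/eqP; rewrite eqr_div ?xFn_neq0 // -!rmorphXn -!rmorphM /= => /eqP/tofrac_inj.
Qed.

Definition xfrac_rep (f : QXY) (np : nat * RXY) := f = np.2%:F / xF ^+ np.1.

(* [f = p / x ^ n] read in [R(x)[y]]; junk value for [f] not of this form. *)
Definition ypoly (f : QXY) : {poly Kx} :=
  let np := epsilon (inhabits (0%N, 0)) (xfrac_rep f) in xK ^- np.1 *: toKy np.2.

Lemma ypolyE f n p : f = p%:F / xF ^+ n -> ypoly f = xK ^- n *: toKy p.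
Proof.
move=> Ef; rewrite /ypoly; set np := epsilon _ _.
have : xfrac_rep f np by apply: epsilon_spec; exists (n, p).
case: np => n' p'; rewrite /xfrac_rep /= => Ef'.
have /(congr1 toKy) := xfrac_eq (etrans (esym Ef') Ef).
rewrite !toKy_mulXn => E.
apply: (can_inj (scalerK (mulf_neq0 (xKn_neq0 n) (xKn_neq0 n')))).
by rewrite !scalerA mulfK ?xKn_neq0 // [_ * xK ^- n]mulrC mulKf ?xKn_neq0.
Qed.

Lemma ypoly_tofrac p : ypoly p%:F = toKy p.
Proof. by rewrite (@ypolyE _ 0 p) ?expr0 ?invr1 ?scale1r ?mulr1. Qed.

Lemma inM_add (a b : int) (c d : nat) : inM a c -> inM b d -> inM (a + b) (c + d).
Proof. by rewrite /inM => /orP[] ? /orP[] ?; apply/orP; lia. Qed.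

Lemma monoidAlgM f g : monoidAlg f -> monoidAlg g -> monoidAlg (f * g).
Proof.
move=> [n [p [-> Mp]]] [m [q [-> Mq]]].
exists (n + m)%N, (p * q); split; first by rewrite rmorphM exprD invfM mulrACA.
move=> i j; rewrite coefM coef_sum; apply: contraNT => nM.
rewrite big1 // => k _; rewrite coefM big1 // => l _.
have [pkl0|/Mp Mkl] := eqVneq ((p`_k)`_l) 0; first by rewrite pkl0 mul0r.
have [qkl0|/Mq Mkl'] := eqVneq ((q`_(i - k))`_(j - l)) 0; first by rewrite qkl0 mulr0.
exfalso; move: nM (inM_add Mkl Mkl') (ltn_ord k) (ltn_ord l).
by rewrite /inM; lia.
Qed.

Lemma monoidAlg_tofrac p : monoidAlg p%:F.
Proof.
exists 0%N, p; split; first by rewrite expr0 invr1 mulr1.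
by move=> i j _; rewrite /inM subr0.
Qed.

Lemma monoidAlg1 : monoidAlg 1.
Proof. by rewrite -(rmorph1 (@FracField.tofrac RXY)); exact: monoidAlg_tofrac. Qed.

Lemma ypolyM f g : monoidAlg f -> monoidAlg g -> ypoly (f * g) = ypoly f * ypoly g.
Proof.
move=> [n [p [Ef _]]] [m [q [Eg _]]].
rewrite (ypolyE Ef) (ypolyE Eg) (@ypolyE _ (n + m) (p * q)); last first.
  by rewrite Ef Eg rmorphM exprD invfM mulrACA.
by rewrite -scalerAl -scalerAr scalerA toKyM exprD invfM.
Qed.

Lemma ypoly_inj f g : monoidAlg f -> monoidAlg g -> ypoly f = ypoly g -> f = g.
Proof.
move=> [n [p [Ef _]]] [m [q [Eg _]]]; rewrite (ypolyE Ef) (ypolyE Eg) => E.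
have /toKy_inj Epq : toKy (p * 'X ^+ m) = toKy (q * 'X ^+ n).
  have /(congr1 ( *:%R (xK ^+ n * xK ^+ m))) := E.
  rewrite !toKy_mulXn !scalerA mulfK ?xKn_neq0 // [xK ^+ n * _]mulrC.
  by rewrite mulfK ?xKn_neq0.
apply/eqP; rewrite {}Ef {}Eg eqr_div ?xFn_neq0 // -!rmorphXn -!rmorphM /=.
by rewrite Epq.
Qed.

Lemma ypoly_neq0 f : monoidAlg f -> f != 0 -> ypoly f != 0.
Proof.
have <- : (0 : RXY)%:F = 0 by rewrite rmorph0.
move=> Mf; apply: contraNneq => Pf0; apply/eqP/(ypoly_inj Mf (monoidAlg_tofrac 0)).
by rewrite Pf0 ypoly_tofrac /toKy !rmorph0.
Qed.

Lemma ypoly_coef_poly f j : monoidAlg f -> (j <= 1)%N ->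
  exists a : {poly RR}, (ypoly f)`_j = a%:F.
Proof.
move=> [n [p [Ef Mp]]] j_le1; rewrite (ypolyE Ef) coefZ coef_toKy.
set q := (swapXY p)`_j.
have q_lown : forall i, (i < n)%N -> q`_i = 0.
  move=> i i_lt_n; rewrite /q coef_swapXY; apply/eqP; apply: contraT => /Mp.
  by rewrite /inM; lia.
exists (drop_poly n q); rewrite -{1}(drop_polyMXnE q_lown) rmorphM rmorphXn /=.
by rewrite mulrCA mulVf ?mulr1 ?xKn_neq0.
Qed.

(* No negative powers of [x] occur: [(a, b) \in M] with [b < 2] forces [a >= 0]. *)
Definition ycoef0 (f : QXY) : {poly RR} :=
  epsilon (inhabits 0) (fun a => a%:F = (ypoly f)`_0).

Lemma ycoef0E f : monoidAlg f -> (ycoef0 f)%:F = (ypoly f)`_0.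
Proof.
move=> Mf; apply: (epsilon_spec (inhabits 0) (fun a => a%:F = (ypoly f)`_0)).
by have [a ->] := ypoly_coef_poly Mf (leq0n 1); exists a.
Qed.

Lemma ycoef0M f g : monoidAlg f -> monoidAlg g -> ycoef0 (f * g) = ycoef0 f * ycoef0 g.
Proof.
move=> Mf Mg; have Mfg := monoidAlgM Mf Mg.
by apply: tofrac_inj; rewrite rmorphM /= !ycoef0E // ypolyM // coef0M.
Qed.

Lemma ycoef0_tofrac p : ycoef0 p%:F = (swapXY p)`_0.
Proof.
apply: tofrac_inj; rewrite ycoef0E ?ypoly_tofrac ?coef_toKy //.
exact: monoidAlg_tofrac.
Qed.

Lemma ypoly1 : ypoly 1 = 1.
Proof. by rewrite -(rmorph1 (@FracField.tofrac RXY)) ypoly_tofrac /toKy !rmorph1. Qed.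

Lemma ycoef0_1 : ycoef0 1 = 1.
Proof. by rewrite -(rmorph1 (@FracField.tofrac RXY)) ycoef0_tofrac rmorph1 coefC. Qed.

(** * Units and atoms *)

Lemma unitS_const c : c != 0 -> unitS monoidAlg (c%:P%:P)%:F.
Proof.
move=> c0; have cF0 : (c%:P%:P : RXY)%:F != 0 by rewrite tofrac_eq0 !polyC_eq0.
do !split; [exact: monoidAlg_tofrac | exact: cF0 |].
have -> : ((c%:P%:P : RXY)%:F)^-1 = (c^-1%:P%:P)%:F.
  by apply: (mulfI cF0); rewrite mulfV // -rmorphM -!polyCM mulfV.
exact: monoidAlg_tofrac.
Qed.

(* The units of [R[x,y;M]] are the nonzero real constants. *)
Lemma unitS_ypolyP f : monoidAlg f ->
  unitS monoidAlg f <-> size (ypoly f) = 1%N /\ size (ycoef0 f) = 1%N.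
Proof.
move=> Mf; split=> [[_ [f0 Mf']]|[/eqP/size_poly1P[k _ Pf] /eqP/size_poly1P[a a0 Ef]]].
  have /eqP : size (ypoly f * ypoly f^-1) = 1%N.
    by rewrite -ypolyM // mulfV // ypoly1 size_poly1.
  have /eqP : size (ycoef0 f * ycoef0 f^-1) = 1%N.
    by rewrite -ycoef0M // mulfV // ycoef0_1 size_poly1.
  by rewrite !size_mul_eq1 => /andP[/eqP-> _] /andP[/eqP-> _].
suff -> : f = (a%:P%:P)%:F by exact: unitS_const.
apply: ypoly_inj => //; first exact: monoidAlg_tofrac.
rewrite ypoly_tofrac Pf /toKy swapXY_polyC map_polyC /= map_polyC /=.
by congr _%:P; rewrite -Ef ycoef0E // Pf coefC.
Qed.

Lemma monoidAlg_xF : monoidAlg xF.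
Proof. exact: monoidAlg_tofrac. Qed.

Lemma monoidAlg_xFn k : monoidAlg (xF ^+ k).
Proof. exact: (S_expr monoidAlg1 (@monoidAlgM) k monoidAlg_xF). Qed.

Lemma ypoly_xFn k : ypoly (xF ^+ k) = (xK ^+ k)%:P.
Proof. by rewrite -(rmorphXn (@FracField.tofrac RXY)) ypoly_tofrac toKyXn. Qed.

Lemma ycoef0_xFn k : ycoef0 (xF ^+ k) = 'X ^+ k.
Proof.
rewrite -(rmorphXn (@FracField.tofrac RXY)) ycoef0_tofrac rmorphXn /= swapXY_X.
by rewrite -polyC_exp coefC.
Qed.

Lemma xFn_nonunit k : (0 < k)%N -> ~ unitS monoidAlg (xF ^+ k).
Proof.
by case: k => // k _ /(unitS_ypolyP (monoidAlg_xFn _))[_]; rewrite ycoef0_xFn size_polyXn.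
Qed.

Lemma ypoly_xF : ypoly xF = xK%:P.
Proof. by rewrite -[xF]expr1 ypoly_xFn. Qed.

Lemma ycoef0_xF : ycoef0 xF = 'X.
Proof. by rewrite -[xF]expr1 ycoef0_xFn. Qed.

Lemma xF_nonunit : ~ unitS monoidAlg xF.
Proof. by rewrite -[xF]expr1; apply: xFn_nonunit. Qed.

Lemma irredS_xF : irredS monoidAlg xF.
Proof.
split; [exact: monoidAlg_xF | exact: xF_neq0 | exact: xF_nonunit |].
move=> u v Mu Mv Exuv.
have /eqP : size (ypoly u * ypoly v) = 1%N.
  by rewrite -ypolyM // -Exuv ypoly_xF size_polyC xK_neq0.
rewrite size_mul_eq1 => /andP[/eqP Pu /eqP Pv].
have [Eu|Ev] : size (ycoef0 u) = 1%N \/ size (ycoef0 v) = 1%N.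
  by apply: size_mul_eq2; rewrite -ycoef0M // -Exuv ycoef0_xF size_polyX.
- by left; apply/unitS_ypolyP.
- by right; apply/unitS_ypolyP.
Qed.

Lemma ypoly_yF : ypoly yF = 'X.
Proof. by rewrite ypoly_tofrac /toKy swapXY_polyC map_polyX map_polyX. Qed.

(* If [ypoly u] is a constant [c] dividing [y], then [c] and the [y]-coefficient
   of the cofactor are polynomials in [x] with product [1]. *)
Lemma yF_factor_unit u v : monoidAlg u -> monoidAlg v ->
  size (ypoly u) = 1%N -> ypoly u * ypoly v = 'X -> unitS monoidAlg u.
Proof.
move=> Mu Mv Pu Euv; have [a Ea] := ypoly_coef_poly Mv (leqnn 1).
have /eqP : (ycoef0 u * a)%:F = 1.
  by rewrite rmorphM /= ycoef0E // -Ea -coefCM -size1_polyC ?Pu // Euv coefX.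
rewrite -(rmorph1 (@FracField.tofrac {poly RR})) tofrac_eq => /eqP E.
have /eqP : size (ycoef0 u * a) = 1%N by rewrite E size_poly1.
rewrite size_mul_eq1 => /andP[/eqP E0u _].
exact/unitS_ypolyP.
Qed.

Lemma irredS_yF : irredS monoidAlg yF.
Proof.
split; [exact: monoidAlg_tofrac | by rewrite tofrac_eq0 polyC_eq0 polyX_eq0 |
  by move/(unitS_ypolyP (monoidAlg_tofrac _)) => [+ _]; rewrite ypoly_yF size_polyX |].
move=> u v Mu Mv Eyuv.
have Euv : ypoly u * ypoly v = 'X by rewrite -ypolyM // -Eyuv ypoly_yF.
have [Pu|Pv] : size (ypoly u) = 1%N \/ size (ypoly v) = 1%N.
  by apply: size_mul_eq2; rewrite Euv size_polyX.
- by left; apply: yF_factor_unit Mv Pu Euv.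
- by right; apply: (yF_factor_unit Mv Mu Pv); rewrite mulrC.
Qed.

Lemma ycoef0_neq0 f : monoidAlg f -> (ypoly f)`_0 != 0 -> ycoef0 f != 0.
Proof. by move=> Mf; rewrite -ycoef0E //; apply: contraNneq => ->; rewrite rmorph0. Qed.

Lemma nonunit_size_gt2 f : monoidAlg f -> (ypoly f)`_0 != 0 -> ~ unitS monoidAlg f ->
  (2 < size (ypoly f) + size (ycoef0 f))%N.
Proof.
move=> Mf f0 nUf; have := ycoef0_neq0 Mf f0.
have : ypoly f != 0 by apply: contraNneq f0 => ->; rewrite coef0.
rewrite -!size_poly_gt0 ltnNge => Pf Ef; apply/negP => size_le2.
by apply/nUf/(unitS_ypolyP Mf); split; lia.
Qed.

(* Induction on [size (ypoly f) + size (ycoef0 f)], which drops strictly along a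
   factorization into nonunits with nonzero constant terms. *)
Lemma atomicS_ycoef0 f : monoidAlg f -> (ypoly f)`_0 != 0 -> atomicS monoidAlg f.
Proof.
have [N] := ubnP (size (ypoly f) + size (ycoef0 f)).
elim: N f => // N IH f size_f Mf f0.
have f_neq0 : f != 0.
  apply: contraNneq f0 => ->.
  by rewrite -(rmorph0 (@FracField.tofrac RXY)) ypoly_tofrac /toKy !rmorph0 coef0.
case: (classic (unitS monoidAlg f)) => [|nUf]; first by left.
case: (classic (irredS monoidAlg f)) => [|nIf]; first exact: atomicS_irred.
have [u [v [Mu Mv Ef nUu nUv]]] := nonunit_factorS Mf f_neq0 nUf nIf.
move: f0 size_f; rewrite Ef ypolyM // ycoef0M // coef0M mulf_eq0 negb_or.
move=> /andP[u0 v0] size_uv.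
have Pu : ypoly u != 0 by apply: contraNneq u0 => ->; rewrite coef0.
have Pv : ypoly v != 0 by apply: contraNneq v0 => ->; rewrite coef0.
have E0u := ycoef0_neq0 Mu u0; have E0v := ycoef0_neq0 Mv v0.
have [lt_u lt_v] : (size (ypoly u) + size (ycoef0 u) < N)%N /\
                   (size (ypoly v) + size (ycoef0 v) < N)%N.
  move: size_uv (nonunit_size_gt2 Mu u0 nUu) (nonunit_size_gt2 Mv v0 nUv).
  rewrite !size_mul //; move: Pu Pv E0u E0v; rewrite -!size_poly_gt0.
  set a := size (ypoly u); set b := size (ycoef0 u).
  set c := size (ypoly v); set d := size (ycoef0 v); lia.
exact: (atomicSM (@monoidAlgM) (IH _ lt_u Mu u0) (IH _ lt_v Mv v0)).
Qed.

Lemma almost_atomic_monoidAlg : almost_atomic_dom monoidAlg.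
Proof.
move=> b [n [p [Eb _]]] b0.
exists (xF ^+ n); split.
  exact: (atomicSX monoidAlg1 (@monoidAlgM) n (atomicS_irred irredS_xF)).
have -> : xF ^+ n * b = p%:F by rewrite Eb mulrC divfK ?xFn_neq0.
have p0 : p != 0 by apply: contraNneq b0 => p0; rewrite Eb p0 rmorph0 mul0r.
have [m [r r0 Epr]] := multiplicity_XsubC (swapXY p) 0.
rewrite swapXY_eq0 p0 /= in r0; rewrite polyC0 subr0 in Epr.
have -> : p = swapXY r * ('X%:P) ^+ m.
  by rewrite -[LHS]swapXYK Epr rmorphM rmorphXn /= swapXY_X.
rewrite rmorphM rmorphXn /= -/yF.
apply: (atomicSM (@monoidAlgM)).
  apply: atomicS_ycoef0; first exact: monoidAlg_tofrac.
  by rewrite ypoly_tofrac coef_toKy swapXYK tofrac_eq0 -horner_coef0.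
exact: (atomicSX monoidAlg1 (@monoidAlgM) m (atomicS_irred irredS_yF)).
Qed.

(** * [y^2/x] is not atomic *)

Definition y2x : QXY := ((('X : {poly RR}) ^+ 2)%:P)%:F / xF.

Lemma monoidAlg_y2x : monoidAlg y2x.
Proof.
exists 1%N, (('X : {poly RR}) ^+ 2)%:P; split; first by rewrite expr1.
move=> i j; rewrite coefC; case: (i =P 0%N) => [->|_]; last by rewrite coef0 eqxx.
by rewrite coefXn; case: (j =P 2%N) => [->|_]; rewrite ?mulr0n ?eqxx.
Qed.

Lemma ypoly_y2x : ypoly y2x = xK^-1 *: 'X ^+ 2.
Proof.
by rewrite (@ypolyE _ 1 (('X ^+ 2)%:P)) ?expr1 // /toKy swapXY_polyC map_polyXn map_polyXn.
Qed.

Lemma y2x_nonunit : ~ unitS monoidAlg y2x.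
Proof.
move/(unitS_ypolyP monoidAlg_y2x) => [].
by rewrite ypoly_y2x size_scale ?invr_neq0 ?xK_neq0 // size_polyXn.
Qed.

Definition yhomog (k : nat) (p : RXY) := forall i j, j != k -> (p`_i)`_j = 0.

Lemma yhomog_ypoly z n p k :
  z = p%:F / xF ^+ n -> ypoly z %= 'X ^+ k -> yhomog k p.
Proof.
move=> Ez /eqpP[[c1 c2] /andP[/= c10 c20] Ec] i j jk.
have : c1 * (ypoly z)`_j = 0 by rewrite -coefZ Ec coefZ coefXn (negPf jk) mulr0.
move/eqP; rewrite mulf_eq0 (negPf c10) (ypolyE Ez) coefZ coef_toKy mulf_eq0.
by rewrite invr_eq0 (negPf (xKn_neq0 n)) tofrac_eq0 -coef_swapXY => /eqP->; rewrite coef0.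
Qed.

Lemma yhomog_tofrac n p k : (k <= 1)%N -> yhomog k p ->
  (forall i j, (p`_i)`_j != 0 -> inM (i%:Z - n%:Z) j) -> exists q, p%:F / xF ^+ n = q%:F.
Proof.
move=> k_le1 hp Mp; have p_lown : forall i, (i < n)%N -> p`_i = 0.
  move=> i i_lt_n; apply/polyP => j; rewrite coef0.
  have [->|/hp //] := eqVneq j k; apply/eqP; apply: contraT => /Mp; rewrite /inM; lia.
exists (drop_poly n p); rewrite -{1}(drop_polyMXnE p_lown) rmorphM rmorphXn /=.
by rewrite mulfK ?xFn_neq0.
Qed.

Lemma yhomog_divxF n p k : (2 <= k)%N -> yhomog k p -> monoidAlg (p%:F / xF ^+ n.+1).
Proof.
move=> k_ge2 hp; exists n.+1, p; split=> // i j pij.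
have -> : j = k by apply: contraTeq pij => /hp ->; rewrite eqxx.
by rewrite /inM k_ge2 orbT.
Qed.

Lemma irredS_dvd_y2x z w : irredS monoidAlg z -> monoidAlg w -> y2x = z * w ->
  exists q, z = q%:F.
Proof.
move=> Iz Mw Ey2x; have [Mz z0 nUz irr_z] := Iz.
have [n [p [Ez Mp]]] := Mz.
have : ypoly z %| ('X - 0%:P) ^+ 2.
  rewrite polyC0 subr0 -(dvdpZr _ _ (invr_neq0 xK_neq0)) -ypoly_y2x Ey2x ypolyM //.
  exact: dvdp_mulIl.
case/dvdp_exp_XsubCP=> k k_le2; rewrite polyC0 subr0 => zk.
have hp := yhomog_ypoly Ez zk.
have [k_le1|k_gt1] := leqP k 1; first by rewrite Ez; apply: yhomog_tofrac hp Mp.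
have Mzx : monoidAlg (z / xF) by rewrite Ez -mulrA -invfM -exprSr; apply: yhomog_divxF hp.
have Ez' : z = xF * (z / xF) by rewrite mulrC divfK ?xF_neq0.
case: (irr_z xF _ monoidAlg_xF Mzx Ez') => [/xF_nonunit //|].
move/(unitS_ypolyP Mzx) => [size1 _]; exfalso; move: (eqp_size zk).
rewrite Ez' (ypolyM monoidAlg_xF Mzx) ypoly_xF size_Cmul ?xK_neq0 // size1 size_polyXn.
lia.
Qed.

Lemma not_atomic_monoidAlg : ~ atomic_dom monoidAlg.
Proof.
have y2x0 : y2x != 0.
  apply: mulf_neq0; last by rewrite invr_eq0 xF_neq0.
  by rewrite tofrac_eq0 polyC_eq0 expf_neq0 ?polyX_eq0.
move=> atomic; have [/y2x_nonunit //|[l [_ Il El]]] := atomic _ monoidAlg_y2x y2x0.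
have [q Eq] : exists q, \prod_(z <- l) z = q%:F.
  apply: (@S_prod _ (fun z => exists q, z = q%:F)).
  - by exists 1; rewrite rmorph1.
  - by move=> _ _ [a ->] [b ->]; exists (a * b); rewrite rmorphM.
  move=> z zl; apply: (@irredS_dvd_y2x _ (\prod_(w <- rem z l) w) (Il z zl)).
    apply: (S_prod monoidAlg1 (@monoidAlgM)) => w /mem_rem wl.
    by have [] := Il w wl.
  by rewrite El (big_rem _ zl).
have /eqP : (q * 'X)%:F = ((('X : {poly RR}) ^+ 2)%:P)%:F.
  by rewrite rmorphM /= -/xF -Eq -El divfK ?xF_neq0.
rewrite tofrac_eq => /eqP/(congr1 (fun r : RXY => r`_0)).
by rewrite coefMX coefC eqxx => /eqP; rewrite eq_sym expf_eq0 polyX_eq0.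
Qed.

(** * Finitely many irreducible divisors *)

Definition ylead (p : RXY) : {poly RR} := lead_coef (swapXY p).

Lemma yleadM p q : ylead (p * q) = ylead p * ylead q.
Proof. by rewrite /ylead rmorphM lead_coefM. Qed.

Lemma ylead_mulXn p n : ylead (p * 'X ^+ n) = ylead p * 'X ^+ n.
Proof. by rewrite yleadM /ylead rmorphXn /= swapXY_X -polyC_exp lead_coefC. Qed.

Lemma lead_coef_ypoly f n p :
  f = p%:F / xF ^+ n -> lead_coef (ypoly f) = xK ^- n * (ylead p)%:F.
Proof.
by move=> Ef; rewrite (ypolyE Ef) lead_coefZ /toKy lead_coef_map_inj //; apply: tofrac_inj.
Qed.

Definition yshape (z : QXY) (G : {poly Kx}) :=
  exists (c : RR) (j n : nat), c != 0 /\ ypoly z = ((c%:P)%:F * xK ^+ j / xK ^+ n) *: G.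

(* The quotient of [z2] by [z1] is a unit times a power of [x], which must be [x^0]
   since [z2] is irreducible and [x] is not a unit. *)
Lemma irredS_yshape_le z1 z2 G c1 j1 n1 c2 j2 n2 :
  irredS monoidAlg z1 -> irredS monoidAlg z2 -> c1 != 0 -> c2 != 0 ->
  ypoly z1 = ((c1%:P)%:F * xK ^+ j1 / xK ^+ n1) *: G ->
  ypoly z2 = ((c2%:P)%:F * xK ^+ j2 / xK ^+ n2) *: G ->
  (j1 + n2 <= j2 + n1)%N -> exists2 u, unitS monoidAlg u & z2 = u * z1.
Proof.
move=> [M1 _ nU1 _] [M2 _ _ irr2] c10 c20 E1 E2 le12.
set e := (j2 + n1 - (j1 + n2))%N; set u : QXY := (((c2 / c1)%:P)%:P)%:F.
have Uu : unitS monoidAlg u by apply: unitS_const; rewrite mulf_neq0 ?invr_neq0.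
have Mu : monoidAlg u := monoidAlg_tofrac _.
have Muz1 := monoidAlgM Mu M1.
have Ez2 : z2 = xF ^+ e * (u * z1).
  apply: ypoly_inj M2 (monoidAlgM (monoidAlg_xFn e) Muz1) _.
  rewrite (ypolyM (monoidAlg_xFn e) Muz1) (ypolyM Mu M1) ypoly_xFn ypoly_tofrac /toKy.
  rewrite swapXY_polyC !map_polyC /= E1 E2 mulrA -polyCM mul_polyC scalerA.
  congr (_ *: _).
  have Ec : ((c2 / c1)%:P)%:F * (c1%:P)%:F = (c2%:P)%:F :> Kx.
    by rewrite -rmorphM -polyCM divfK.
  have Ee : (e + j1 + n2 = j2 + n1)%N by rewrite /e; lia.
  by rewrite -[LHS]mulrA -(expr_div_shift xK_neq0 Ee) -Ec; ring.
case: (posnP e) => [e0|e_gt0]; first by exists u; rewrite // Ez2 e0 expr0 mul1r.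
case: (irr2 _ _ (monoidAlg_xFn e) Muz1 Ez2) => [/(xFn_nonunit e_gt0)//|Uuz1].
by case: (nU1 (unitSKl (@monoidAlgM) Uu Uuz1)).
Qed.

Lemma irredS_yshape_assoc z1 z2 G : irredS monoidAlg z1 -> irredS monoidAlg z2 ->
  yshape z1 G -> yshape z2 G -> assocS monoidAlg z1 z2.
Proof.
move=> I1 I2 [c1 [j1 [n1 [c10 E1]]]] [c2 [j2 [n2 [c20 E2]]]].
have [le12|lt21] := leqP (j1 + n2) (j2 + n1).
  have [u Uu ->] := irredS_yshape_le I1 I2 c10 c20 E1 E2 le12.
  have [_ [u0 _]] := Uu.
  by exists u^-1; split; [apply: unitSV | rewrite mulKf].
have [u Uu ->] := irredS_yshape_le I2 I1 c20 c10 E2 E1 (ltnW lt21).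
by exists u.
Qed.

(* [ypoly a] is associate in [R(x)[y]] to a divisor [m] of [ypoly b], and the leading
   coefficient of [a] is, up to a power of [x] and a real constant, a divisor [d] of
   [ylead pb]. *)
Lemma yshape_of_dvd a c b nb pb (l1 : seq {poly Kx}) (l2 : seq {poly RR}) :
  monoidAlg a -> a != 0 -> monoidAlg c -> b = a * c -> b = pb%:F / xF ^+ nb ->
  (forall d, d %| ypoly b -> exists2 d0, d0 \in l1 & d %= d0) ->
  (forall d, d %| ylead pb -> exists2 d0, d0 \in l2 & d %= d0) ->
  exists2 G, G \in [seq (d%:F / lead_coef m) *: m | d <- l2, m <- l1] & yshape a G.
Proof.
move=> Ma a0 Mc Eb Ebp Hl1 Hl2.
have [na [pa [Ea _]]] := Ma; have [nc [pc [Ec _]]] := Mc.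
have /Hl1[m ml am] : ypoly a %| ypoly b by rewrite Eb ypolyM // dvdp_mulIl.
have m0 : m != 0 by apply: contraNneq (ypoly_neq0 Ma a0) => m0; rewrite -eqp0 -m0.
have pa0 : pa != 0 by apply: contraNneq a0 => pa0; rewrite Ea pa0 rmorph0 mul0r.
have : ylead pa %| ylead pb * 'X ^+ (na + nc).
  have /xfrac_eq Ep : pb%:F / xF ^+ nb = (pa * pc)%:F / xF ^+ (na + nc).
    by rewrite -Ebp Eb Ea Ec rmorphM exprD invfM mulrACA.
  by rewrite -ylead_mulXn Ep ylead_mulXn yleadM -mulrA dvdp_mulIl.
have ya0 : ylead pa != 0 by rewrite lead_coef_eq0 swapXY_eq0.
case/(dvdp_mulXn_split ya0)=> j [q' [Eq' /Hl2[d dl q'd]]].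
have q'0 : q' != 0 by apply: contraNneq ya0 => q'0; rewrite Eq' q'0 mul0r.
have d0 : d != 0 by apply: contraNneq q'0 => d0; rewrite -eqp0 -d0.
exists ((d%:F / lead_coef m) *: m); first exact: allpairs_f.
exists (lead_coef q' / lead_coef d), j, na; split.
  by rewrite mulf_neq0 ?invr_eq0 ?lead_coef_eq0.
rewrite [LHS](eqp_scale_lead m0 am) (lead_coef_ypoly Ea) scalerA; congr (_ *: _).
rewrite Eq' {1}(eqp_scale_lead d0 q'd) -mul_polyC !rmorphM rmorphXn /= -/xK.
by ring.
Qed.

Lemma IDF_monoidAlg : IDF_dom monoidAlg.
Proof.
move=> b Mb b0; have [nb [pb [Eb _]]] := Mb.
have pb0 : pb != 0 by apply: contraNneq b0 => pb0; rewrite Eb pb0 rmorph0 mul0r.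
have [l1 Hl1] := finite_dvdp_classes (ypoly_neq0 Mb b0).
have [l2 Hl2] : exists l2 : seq {poly RR},
    forall d, d %| ylead pb -> exists2 d0, d0 \in l2 & d %= d0.
  by apply: finite_dvdp_classes; rewrite lead_coef_eq0 swapXY_eq0.
pose P G z := [/\ irredS monoidAlg z, dvdS monoidAlg z b & yshape z G].
pose rep G := epsilon (inhabits 0) (P G).
exists [seq rep G | G <- [seq (d%:F / lead_coef m) *: m | d <- l2, m <- l1]].
move=> a Ia [c [Mc Eac]]; have [Ma a0 _ _] := Ia.
have [G GS aG] := yshape_of_dvd Ma a0 Mc Eac Eb Hl1 Hl2.
have [Irep _ repG] : P G (rep G).
  by apply: epsilon_spec; exists a; split=> //; exists c.
exists (rep G); first exact: map_f.
exact: irredS_yshape_assoc Ia Irep aG repG.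
Qed.

Theorem mainTheorem12 :
  IDF_dom monoidAlg /\ almost_atomic_dom monoidAlg /\ ~ atomic_dom monoidAlg.
Proof.
split; first exact: IDF_monoidAlg.
split; first exact: almost_atomic_monoidAlg.
exact: not_atomic_monoidAlg.
Qed.
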